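(* Let $\mathbb{X},\mathbb{Y}$ be finite-dimensional real Hilbert spaces, $f:\mathbb{X}\to(-\infty,\infty]$ and $g:\mathbb{Y}\to(-\infty,\infty]$ proper, convex and lower semicontinuous, $K:\mathbb{X}\to\mathbb{Y}$ linear, and $h:\mathbb{X}\to\mathbb{R}$ convex, differentiable and locally smooth. Let $(x_n)$, $(\tau_n)$, $(\theta_n)$ be generated by the aEGRPDA algorithm described in the context, and suppose $(x_n)$ is bounded. Then the sequences $(\tau_n)$ and $(\theta_n)$ are bounded below by positive constants.
   Context: $\phi=\frac{1+\sqrt5}{2}$; $K^*$ adjoint of $K$; $\|K\|$ operator norm; $\operatorname{prox}_{\lambda f}(x)=\arg\min_{u}\{f(u)+\frac{1}{2\lambda}\|u-x\|^2\}$. Locally smooth: for every compact $D\subset\mathbb{X}$ there is $L_D>0$ with $\|\nabla h(x)-\nabla h(y)\|\le L_D\|x-y\|$ for all $x,y\in D$. aEGRPDA: choose $x_0\in\mathbb{X}$, $y_0\in\mathbb{Y}$, set $z_0=x_0$; choose $\beta>0$, $\psi\in(1,\phi]$, $\rho=\psi^{-1}+\psi^{-2}$, $\theta_0>0$, $\tau_{\max}>0$, $\tau_0>0$. For $n=1,2,\dots$: $z_n=\frac{\psi-1}{\psi}x_{n-1}+\frac1\psi z_{n-1}$; $x_n=\operatorname{prox}_{\tau_{n-1}f}\big(z_n-\tau_{n-1}K^*y_{n-1}-\tau_{n-1}\nabla h(x_{n-1})\big)$; $\tau_n=\min\left\{\rho\tau_{n-1},\ \frac{\psi\theta_{n-1}}{9(\bar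 L_n^2+\beta\psi\|K\|^2)}\frac{1}{\tau_{n-1}},\ \tau_{\max}\right\}$ where $\bar L_n=\frac{\|\nabla h(x_n)-\nabla h(x_{n-1})\|}{\|x_n-x_{n-1}\|}$ (if $x_n=x_{n-1}$, then $\tau_n=\min\{\rho\tau_{n-1},\tau_{\max}\}$; a zero denominator is read as $+\infty$); $\sigma_n=\beta\tau_n$; $w_n=\operatorname{prox}_{\frac1{\sigma_n}g}\big(\frac{y_{n-1}}{\sigma_n}+Kx_n\big)$; $y_n=y_{n-1}+\sigma_n(Kx_n-w_n)$; $\theta_n=\frac{\psi\tau_n}{\tau_{n-1}}$. *)

(* Finite-dimensional real Hilbert spaces are modelled
   as Euclidean column-vector spaces 'cV[R]_m with the standard inner product. *)
From HB Require Import structures.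
From mathcomp Require Import all_boot all_order all_algebra.
From mathcomp Require Import all_classical all_reals all_analysis.
Set Implicit Arguments. Unset Strict Implicit. Unset Printing Implicit Defensive.
Import Order.TTheory GRing.Theory Num.Theory.
Import numFieldNormedType.Exports.
Local Open Scope classical_set_scope.
Local Open Scope ring_scope.

Section Defs.
Variable R : realType.

Definition dotv (m : nat) (u v : 'cV[R]_m) : R := (u^T *m v) 0 0.
Definition enorm (m : nat) (u : 'cV[R]_m) : R := Num.sqrt (dotv u u).

(* operator norm of a linear map K : R^m -> R^p (represented by a matrix,
   acting as x |-> K *m x); its adjoint is the transpose K^T *)
Definition opnorm (p m : nat) (K : 'M[R]_(p, m)) : R :=
  sup [set enorm (K *m x) | x in [set x : 'cV[R]_m | enorm x <= 1]].

Definition golden : R := (1 + Num.sqrt 5) / 2.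

Definition proper_fun (m : nat) (f : 'cV[R]_m -> \bar R) : Prop :=
  (exists x, f x < +oo)%E /\ (forall x, -oo < f x)%E.

Definition convex_efun (m : nat) (f : 'cV[R]_m -> \bar R) : Prop :=
  forall (x y : 'cV[R]_m) (t : R), 0 <= t <= 1 ->
    (f (t *: x + (1 - t) *: y)%R <= t%:E * f x + (1 - t)%:E * f y)%E.

Definition convex_rfun (m : nat) (h : 'cV[R]_m -> R) : Prop :=
  forall (x y : 'cV[R]_m) (t : R), 0 <= t <= 1 ->
    h (t *: x + (1 - t) *: y) <= t * h x + (1 - t) * h y.

Definition is_gradient (m : nat) (h : 'cV[R]_m -> R) (gradh : 'cV[R]_m -> 'cV[R]_m) : Prop :=
  forall x, differentiable h x /\ forall v, 'd h x v = dotv (gradh x) v.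

Definition locally_smooth (m : nat) (gradh : 'cV[R]_m -> 'cV[R]_m) : Prop :=
  forall D : set 'cV[R]_m, compact D ->
    exists2 L : R, 0 < L &
      forall x y, D x -> D y -> enorm (gradh x - gradh y) <= L * enorm (x - y).

Definition is_prox (m : nat) (lam : R) (f : 'cV[R]_m -> \bar R) (x p : 'cV[R]_m) : Prop :=
  forall u, (f p + (enorm (p - x)%R ^+ 2 / (2 * lam))%:E
             <= f u + (enorm (u - x)%R ^+ 2 / (2 * lam))%:E)%E.

End Defs.

From HB Require Import structures.
From mathcomp Require Import all_boot all_order all_algebra.
From mathcomp Require Import all_classical all_reals all_analysis.
From mathcomp Require Import ring lra.
Set Implicit Arguments. Unset Strict Implicit. Unset Printing Implicit Defensive.
Import Order.TTheory GRing.Theory Num.Theory.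
Import numFieldNormedType.Exports.
Local Open Scope classical_set_scope.
Local Open Scope ring_scope.

(** Since [(x_n)] is bounded, it stays in a compact box on which [gradh] is
   [L]-Lipschitz, so every [Lbar_n <= L] and every denominator of the step-size
   rule is at most [D = 9 (L^2 + beta psi ||K||^2)].  As [psi <= golden],
   [psi^2 <= psi + 1], i.e. [rho >= 1], so [tau_n] is never decreased by the
   [rho]-branch and stays below [max tau_0 taumax].  Because
   [theta_(n+1) = psi tau_(n+1) / tau_n], the second candidate
   [psi theta_(n+1) / (D tau_(n+1)) = psi^2 / (D tau_n)] is bounded below in
   terms of that upper bound, and an induction bounds [tau_n] away from [0];
   then [theta_(n+1) = psi tau_(n+1) / tau_n] is bounded away from [0] too. *)

Lemma trmx_continuous (R : numFieldType) (T : pseudoMetricType R) m n :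
  continuous (@trmx T m n).
Proof.
move=> u A /nbhs_ballP[e /= e0 eA].
apply/nbhs_ballP; exists e => //= v [_ uv]; apply: eA; split => // i j.
by rewrite !mxE; apply: uv.
Qed.

Lemma cV_compact (R : numFieldType) (T : pseudoPMetricType R) m (A : 'I_m -> set T) :
  (forall i, compact (A i)) -> compact [set x : 'cV[T]_m | forall i, A i (x i 0)].
Proof.
move=> cA.
have -> : [set x : 'cV[T]_m | forall i, A i (x i 0)] =
    trmx @` [set v : 'rV[T]_m | forall i, A i (v 0 i)].
  apply/seteqP; split => [x Ax | _ [v Av <-] i].
    by exists x^T; [move=> i; rewrite mxE | rewrite trmxK].
  by rewrite mxE.
apply: continuous_compact; last exact: rV_compact.
exact/continuous_subspaceT/trmx_continuous.
Qed.

Lemma cV_entry_le_enorm (R : realType) m (x : 'cV[R]_m) i : `|x i 0| <= enorm x.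
Proof.
rewrite /enorm; have -> : dotv x x = \sum_k x k 0 ^+ 2.
  by rewrite /dotv mxE; apply: eq_bigr => k _; rewrite mxE expr2.
rewrite -sqrtr_sqr ler_sqrt; last by apply: sumr_ge0 => k _; exact: sqr_ge0.
by rewrite (bigD1 i) //= lerDl; apply: sumr_ge0 => k _; exact: sqr_ge0.
Qed.

Lemma locally_smooth_bounded (R : realType) m (G : 'cV[R]_m -> 'cV[R]_m) (M : R) :
  locally_smooth G -> exists2 L : R, 0 < L &
    forall u v, enorm u <= M -> enorm v <= M -> enorm (G u - G v) <= L * enorm (u - v).
Proof.
move=> /(_ _ (cV_compact (fun=> @segment_compact _ (- M) M)))[L L_gt0 GL].
exists L => // u v uM vM; apply: GL => i /=;
  by rewrite in_itv /= -ler_norml (le_trans (cV_entry_le_enorm _ _)).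
Qed.

(* [b = 0] is allowed: then [a / b = 0]. *)
Lemma divr_le_of_le_mul (R : numFieldType) (a b L : R) :
  0 <= L -> 0 <= a -> 0 <= b -> a <= L * b -> 0 <= a / b <= L.
Proof.
move=> L_ge0 a_ge0 b_ge0 aLb; rewrite divr_ge0 //=.
have [->|b_neq0] := eqVneq b 0; first by rewrite invr0 mulr0.
by rewrite ler_pdivrMr // lt_def b_neq0.
Qed.

Lemma golden_sqr_le (R : realType) (psi : R) :
  0 <= psi -> psi <= golden R -> psi ^+ 2 <= psi + 1.
Proof.
rewrite /golden => psi_ge0 psi_le.
have s_ge0 : 0 <= Num.sqrt (5 : R) by apply: sqrtr_ge0.
have s_sqr : Num.sqrt (5 : R) ^+ 2 = 5 by rewrite sqr_sqrtr.
set s := Num.sqrt 5 in s_ge0 s_sqr psi_le.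
have s_ge1 : 1 <= s by nra.
have : (psi - (1 + s) / 2) * (psi - (1 - s) / 2) <= 0 by apply: mulr_le0_ge0; lra.
lra.
Qed.

Lemma golden_inv_add_inv_sqr_ge1 (R : realType) (psi : R) :
  0 < psi -> psi <= golden R -> 1 <= psi^-1 + psi^-2.
Proof.
move=> psi_gt0 psi_le; have := golden_sqr_le (ltW psi_gt0) psi_le.
have -> : psi^-1 + psi^-2 = (psi + 1) / psi ^+ 2 by field; lra.
by rewrite ler_pdivlMr ?exprn_gt0 // mul1r.
Qed.

Section StepsizeBounds.
Variables (R : realFieldType) (psi rho D taumax : R).
Variables (tau theta den : nat -> R) (stalled : nat -> bool).
Hypotheses (psi_gt0 : 0 < psi) (rho_ge1 : 1 <= rho) (D_gt0 : 0 < D).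
Hypotheses (taumax_gt0 : 0 < taumax) (tau0_gt0 : 0 < tau 0).
Hypothesis theta0_gt0 : 0 < theta 0.
Hypotheses (den_ge0 : forall n, 0 <= den n) (den_le : forall n, den n <= D).
Hypothesis tau_next : forall n, tau n.+1 =
  if stalled n || (den n == 0) then Num.min (rho * tau n) taumax
  else Num.min (Num.min (rho * tau n) (psi * theta n / den n / tau n)) taumax.
Hypothesis theta_next : forall n, theta n.+1 = psi * tau n.+1 / tau n.

Let tau_ub := Num.max (tau 0) taumax.
Let cand n := psi * theta n / D / tau n.

Let tau_ub_gt0 : 0 < tau_ub.
Proof. by rewrite lt_max tau0_gt0. Qed.

Lemma tau_le_ub n : tau n <= tau_ub.
Proof.
case: n => [|n]; first by rewrite le_max lexx.
rewrite tau_next le_max; apply/orP; right.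
by case: ifP => _; rewrite ge_min lexx orbT.
Qed.

Lemma tau_next_ge n : 0 < tau n -> 0 <= cand n ->
  Num.min (Num.min (tau n) taumax) (cand n) <= tau n.+1.
Proof.
move=> tau_gt0 cand_ge0.
have rho_tau : tau n <= rho * tau n by exact: ler_peMl (ltW tau_gt0) rho_ge1.
rewrite tau_next; case: ifP => [_|/norP[_ den_neq0]].
  by rewrite !le_min !ge_min rho_tau lexx !orbT.
have den_gt0 : 0 < den n by rewrite lt_def den_neq0 den_ge0.
have cand_le : cand n <= psi * theta n / den n / tau n.
  have -> : psi * theta n / den n / tau n = cand n * (D / den n).
    by rewrite /cand; field; rewrite den_neq0 !gt_eqF.
  by apply: ler_peMr => //; rewrite ler_pdivlMr // mul1r.
by rewrite !le_min !ge_min rho_tau lexx cand_le !orbT.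
Qed.

Lemma cand_next n :
  0 < tau n -> 0 < tau n.+1 -> cand n.+1 = psi ^+ 2 / D / tau n.
Proof. by move=> ? ?; rewrite /cand theta_next; field; rewrite !gt_eqF. Qed.

Let tau_lb :=
  Num.min (Num.min (tau 0) taumax) (Num.min (cand 0) (psi ^+ 2 / D / tau_ub)).

Lemma tau_lb_gt0 : 0 < tau_lb.
Proof.
by rewrite !lt_min tau0_gt0 taumax_gt0 /cand !divr_gt0 ?mulr_gt0 ?exprn_gt0.
Qed.

Lemma tau_lb_le n : tau_lb <= tau n /\ tau_lb <= cand n.
Proof.
elim: n => [|n [lb_tau lb_cand]]; first by rewrite !ge_min !lexx !orbT.
have tau_gt0 := lt_le_trans tau_lb_gt0 lb_tau.
have lb_tau_next : tau_lb <= tau n.+1.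
  apply: le_trans (tau_next_ge tau_gt0 (le_trans (ltW tau_lb_gt0) lb_cand)).
  by rewrite !le_min lb_tau lb_cand !ge_min lexx !orbT.
split=> //; rewrite cand_next // ?(lt_le_trans tau_lb_gt0) //.
apply: le_trans (_ : psi ^+ 2 / D / tau_ub <= _).
  by rewrite !ge_min lexx !orbT.
by rewrite ler_pM2l ?divr_gt0 ?exprn_gt0 // lef_pV2 ?tau_le_ub ?posrE.
Qed.

Lemma theta_bounded_below : exists2 c, 0 < c & forall n, c <= theta n.
Proof.
exists (Num.min (theta 0) (psi * tau_lb / tau_ub)).
  by rewrite lt_min theta0_gt0 !mulr_gt0 ?tau_lb_gt0 ?invr_gt0.
case=> [|n]; first by rewrite ge_min lexx.
have [lb_tau _] := tau_lb_le n; have [lb_tau_next _] := tau_lb_le n.+1.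
have tau_gt0 := lt_le_trans tau_lb_gt0 lb_tau.
rewrite ge_min theta_next; apply/orP; right.
apply: ler_pM.
- exact: mulr_ge0 (ltW psi_gt0) (ltW tau_lb_gt0).
- by rewrite invr_ge0 ltW.
- by rewrite ler_pM2l.
- by rewrite lef_pV2 ?posrE ?tau_le_ub.
Qed.

Lemma stepsizes_bounded_below :
  (exists2 c, 0 < c & forall n, c <= tau n) /\
  (exists2 c, 0 < c & forall n, c <= theta n).
Proof.
split; last exact: theta_bounded_below.
by exists tau_lb; [exact: tau_lb_gt0 | move=> n; case: (tau_lb_le n)].
Qed.

End StepsizeBounds.

Theorem proposition5p1 (R : realType) (m p : nat)
  (f : 'cV[R]_m -> \bar R) (g : 'cV[R]_p -> \bar R)
  (K : 'M[R]_(p, m)) (h : 'cV[R]_m -> R) (gradh : 'cV[R]_m -> 'cV[R]_m)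
  (beta psi rho theta0 taumax tau0 : R)
  (x z : nat -> 'cV[R]_m) (y w : nat -> 'cV[R]_p) (tau sigma theta : nat -> R) :
  proper_fun f -> convex_efun f -> lower_semicontinuous f ->
  proper_fun g -> convex_efun g -> lower_semicontinuous g ->
  convex_rfun h -> is_gradient h gradh -> locally_smooth gradh ->
  0 < beta -> 1 < psi -> psi <= golden R -> rho = psi^-1 + psi^-2 ->
  0 < theta0 -> 0 < taumax -> 0 < tau0 ->
  z 0%N = x 0%N -> theta 0%N = theta0 -> tau 0%N = tau0 ->
  (forall n, z n.+1 = ((psi - 1) / psi) *: x n + psi^-1 *: z n) ->
  (forall n, is_prox (tau n) f
       (z n.+1 - tau n *: (K^T *m y n) - tau n *: gradh (x n)) (x n.+1)) ->
  (forall n,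
     let Lbar := enorm (gradh (x n.+1) - gradh (x n)) / enorm (x n.+1 - x n) in
     let den := 9 * (Lbar ^+ 2 + beta * psi * opnorm K ^+ 2) in
     tau n.+1 =
       if (x n.+1 == x n) || (den == 0)
       then Num.min (rho * tau n) taumax
       else Num.min (Num.min (rho * tau n) (psi * theta n / den / tau n)) taumax) ->
  (forall n, sigma n.+1 = beta * tau n.+1) ->
  (forall n, is_prox (sigma n.+1)^-1 g ((sigma n.+1)^-1 *: y n + K *m x n.+1) (w n.+1)) ->
  (forall n, y n.+1 = y n + sigma n.+1 *: (K *m x n.+1 - w n.+1)) ->
  (forall n, theta n.+1 = psi * tau n.+1 / tau n) ->
  (exists M : R, forall n, enorm (x n) <= M) ->
  (exists2 c : R, 0 < c & forall n, c <= tau n) /\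
  (exists2 c : R, 0 < c & forall n, c <= theta n).
Proof.
move=> _ _ _ _ _ _ _ _ smooth beta_gt0 psi_gt1 psi_le rhoE theta0_gt0 taumax_gt0
  tau0_gt0 _ theta0E tau0E _ _ tau_next _ _ _ theta_next [M x_le].
have [L L_gt0 gradL] := locally_smooth_bounded M smooth.
pose Lbar n := enorm (gradh (x n.+1) - gradh (x n)) / enorm (x n.+1 - x n).
have Lbar_le n : 0 <= Lbar n <= L.
  apply: divr_le_of_le_mul; last exact: gradL.
  - exact: ltW.
  - exact: sqrtr_ge0.
  - exact: sqrtr_ge0.
have psi_gt0 : 0 < psi by apply: lt_trans psi_gt1.
have opK_ge0 : 0 <= beta * psi * opnorm K ^+ 2.
  by rewrite mulr_ge0 ?sqr_ge0 // mulr_ge0 // ltW.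
pose D := 9 * (L ^+ 2 + beta * psi * opnorm K ^+ 2).
pose den n := 9 * (Lbar n ^+ 2 + beta * psi * opnorm K ^+ 2).
apply: (stepsizes_bounded_below (psi := psi) (rho := rho) (D := D)
  (taumax := taumax) (den := den) (stalled := fun n => x n.+1 == x n)) => //.
- by rewrite rhoE; apply: golden_inv_add_inv_sqr_ge1.
- by rewrite /D; have := exprn_gt0 2 L_gt0; lra.
- by rewrite tau0E.
- by rewrite theta0E.
- by move=> n; rewrite /den; have := sqr_ge0 (Lbar n); lra.
- by move=> n; rewrite /den /D; have /andP[? ?] := Lbar_le n; nra.
Qed.
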